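(* Let $P=MN_P$ be a standard parabolic subgroup of $G$, $\pi\in\Pi_{\mathrm{disc}}(M)$, $Q\subset R$ standard parabolic subgroups and $w,w'\in{}_QW_P$ with $P_\pi\subset P_w\cap P_{w'}$. Then the map $$(\lambda,\lambda')\mapsto(\hat\theta_Q^R\theta_R)(w\lambda+w'\lambda'+w\nu^P_{P_w}+w'\nu^P_{P_{w'}})$$ does not vanish identically on $i\mathfrak a_P^{G,*}\times i\mathfrak a_P^{G,*}$.
   Context: $F$ is a number field, $G=\mathrm{GL}_n$ over $F$, $P_0$ the upper triangular Borel, $W\cong\mathfrak S_n$, $\mathfrak a_0=\mathbb R^n$ (identified with its dual via the standard inner product). For standard $Q\subset R$: $\Delta_Q^R$ the simple roots of $A_Q$ in $M_R\cap N_Q$, $\Delta_R^\vee$ the simple coroots of $R$, $\hat\Delta_Q^{R,\vee}\subset\mathfrak a_Q^R$ the basis dual to $\Delta_Q^R$ (simple coweights); $\theta_R(\mu)=\mathrm{vol}(\mathfrak a_R^G/\mathbb Z(\Delta_R^\vee))^{-1}\prod_{\alpha\in\Delta_R}\langle\mu,\alpha^\vee\rangle$ and $\hat\theta_Q^R(\mu)=\mathrm{vol}(\mathfrak a_Q^R/\mathbb Z(\hat\Delta_Q^{R,\vee}))^{-1}\prod_{\varpi^\vee\in\hat\Delta_Q^{R,\vee}}\langle\mu,\varpi^\vee\rangle$. ${}_QW_P$ is the set of $w\in W$ with $M_P\cap w^{-1}P_0w=M_P\cap P_0$ and $M_Q\cap wP_0w^{-1}=M_Q\cap P_0$; $P_w=(M_P\cap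 w^{-1}Qw)N_P$. $\Pi_{\mathrm{disc}}(M)$: discrete automorphic representations of $M(\mathbb A)$ with central character trivial on $A_M^\infty$. Write $M=\prod G_{n_i}$, $\pi=\boxtimes\pi_i$; by Moeglin–Waldspurger $n_i=r_id_i$ with $\pi_i$ the residual representation attached to $\sigma_i^{\otimes d_i}$, $\sigma_i$ cuspidal on $\mathrm{GL}_{r_i}$; $P_\pi\subset P$ is the standard parabolic with $P_\pi\cap M=\prod P_{\pi_i}$, $P_{\pi_i}$ standard in $\mathrm{GL}_{n_i}$ with Levi $\mathrm{GL}_{r_i}^{d_i}$. For $P_\pi\subset S\subset P$, $S\cap M=\prod S_i$, $\nu_S^P=(-\rho_{S_i}^{\mathrm{GL}_{n_i}}/r_i)_i\in\mathfrak a_S^{P,*}$. *)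

From HB Require Import structures.
From mathcomp Require Import all_boot all_order all_algebra all_fingroup.
From mathcomp Require Import reals complex.
Set Implicit Arguments. Unset Strict Implicit. Unset Printing Implicit Defensive.
Import Order.TTheory GRing.Theory Num.Theory.
Local Open Scope ring_scope.

(* Conventions.  G = GL_n, coordinates 'I_n (0-based).  The simple root     *)
(* alpha_k (k : 'I_n.-1) is e_k - e_{k+1}.  A standard parabolic subgroup   *)
(* is encoded by the set D : {set 'I_n.-1} of simple roots of its Levi      *)
(* (Delta_0^P); P_0 corresponds to set0, G to setT.  Q \subset R as groups   *)
(* iff DQ \subset DR.                                                        *)

(* i and j lie in the same diagonal block of the standard Levi given by D *)
Definition sameblk (n : nat) (D : {set 'I_n.-1}) (i j : nat) : bool :=
  [forall k : 'I_n.-1, ((minn i j <= k)%N && (k < maxn i j)%N) ==> (k \in D)].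

Definition blocksize (n : nat) (D : {set 'I_n.-1}) (a : nat) : nat :=
  #|[set b : 'I_n | sameblk D a b]|.

Definition blockstart (n : nat) (D : {set 'I_n.-1}) (a : nat) : nat :=
  #|[set b : 'I_n | (b < a)%N && ~~ sameblk D a b]|.

Definition inPar (n : nat) (D : {set 'I_n.-1}) (g : 'M[rat]_n) : bool :=
  (g \in unitmx) &&
  [forall i : 'I_n, forall j : 'I_n, ((j < i)%N && ~~ sameblk D i j) ==> (g i j == 0)].
Definition inLevi (n : nat) (D : {set 'I_n.-1}) (g : 'M[rat]_n) : bool :=
  (g \in unitmx) &&
  [forall i : 'I_n, forall j : 'I_n, ~~ sameblk D i j ==> (g i j == 0)].
Definition inUnip (n : nat) (D : {set 'I_n.-1}) (g : 'M[rat]_n) : bool :=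
  [forall i : 'I_n, forall j : 'I_n,
    if sameblk D i j then g i j == (i == j)%:R else ((j < i)%N ==> (g i j == 0))].
Definition inB (n : nat) (g : 'M[rat]_n) : bool := inPar (set0 : {set 'I_n.-1}) g.

(* permutation matrix representing w : w e_j = e_{w j} *)
Definition wmat (n : nat) (w : 'S_n) : 'M[rat]_n := \matrix_(i, j) (i == w j)%:R.
Definition wconj (n : nat) (w : 'S_n) (g : 'M[rat]_n) : 'M[rat]_n :=
  wmat w *m g *m invmx (wmat w).

(* w \in _Q W_P :  M_P \cap w^{-1} P_0 w = M_P \cap P_0  and
                   M_Q \cap w P_0 w^{-1} = M_Q \cap P_0 *)
Definition in_QWP (n : nat) (DQ DP : {set 'I_n.-1}) (w : 'S_n) : Prop :=
  (forall g : 'M[rat]_n, (inLevi DP g && inB (wconj w g)) = (inLevi DP g && inB g)) /\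
  (forall g : 'M[rat]_n, (inLevi DQ g && inB (wconj w^-1 g)) = (inLevi DQ g && inB g)).

Definition inPw (n : nat) (DQ DP : {set 'I_n.-1}) (w : 'S_n) (g : 'M[rat]_n) : Prop :=
  exists m u : 'M[rat]_n,
    [/\ inLevi DP m, inPar DQ (wconj w m), inUnip DP u & g = m *m u].

(* P_pi for the data r: within each block of P (size n_i = r_i d_i) the Levi
   of P_pi is GL_{r_i}^{d_i}.  r a = r_i for a coordinate a in block i. *)
Definition Dpi (n : nat) (DP : {set 'I_n.-1}) (r : nat -> nat) : {set 'I_n.-1} :=
  [set k : 'I_n.-1 | (k \in DP) && ~~ (r k %| (k.+1 - blockstart DP k))%N].

(* ---------------- a_0 = R^n, identified with its dual ------------------- *)
Section Real.
Variable R : realType.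
Local Open Scope complex_scope.

Definition dotv (n : nat) (v u : 'I_n -> R) : R := \sum_i v i * u i.

Definition in_a (n : nat) (D : {set 'I_n.-1}) (v : 'I_n -> R) : Prop :=
  forall i j : 'I_n, sameblk D i j -> v i = v j.
Definition in_aG (n : nat) (D : {set 'I_n.-1}) (v : 'I_n -> R) : Prop :=
  in_a D v /\ \sum_i v i = 0.
(* v \in a_0^D  (span of the coroots of M_D) *)
Definition in_a0 (n : nat) (D : {set 'I_n.-1}) (v : 'I_n -> R) : Prop :=
  forall i : 'I_n, \sum_(j : 'I_n | sameblk D i j) v j = 0.

(* alpha_k = alpha_k^vee = e_k - e_{k+1} *)
Definition ealpha (n : nat) (k : 'I_n.-1) : 'I_n -> R :=
  fun i => (i == k :> nat)%:R - (i == k.+1 :> nat)%:R.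

Definition projA (n : nat) (D : {set 'I_n.-1}) (v : 'I_n -> R) : 'I_n -> R :=
  fun i => (\sum_(j : 'I_n | sameblk D i j) v j) / (blocksize D i)%:R.

(* simple coroot of R attached to k \notin DR: projection of alpha_k^vee to a_R *)
Definition coroot (n : nat) (DR : {set 'I_n.-1}) (k : 'I_n.-1) : 'I_n -> R :=
  projA DR (ealpha k).

Definition gram (n : nat) (A : {set 'I_n.-1}) (f : 'I_n.-1 -> 'I_n -> R) : 'M[R]_#|A| :=
  \matrix_(i, j) dotv (f (enum_val i)) (f (enum_val j)).

(* vol(span / Z(f k, k in A)) = sqrt det Gram *)
Definition covol (n : nat) (A : {set 'I_n.-1}) (f : 'I_n.-1 -> 'I_n -> R) : R :=
  Num.sqrt (\det (gram A f)).

Definition pairC (n : nat) (mu : 'I_n -> R[i]) (v : 'I_n -> R) : R[i] :=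
  \sum_i mu i * (v i)%:C.

Definition thetaR (n : nat) (DR : {set 'I_n.-1}) (mu : 'I_n -> R[i]) : R[i] :=
  ((covol (~: DR) (coroot DR))^-1)%:C * \prod_(k in ~: DR) pairC mu (coroot DR k).

Definition is_coweight_basis (n : nat) (DQ DR : {set 'I_n.-1})
    (varpi : 'I_n.-1 -> 'I_n -> R) : Prop :=
  (forall k, k \in DR :\: DQ -> in_a DQ (varpi k) /\ in_a0 DR (varpi k)) /\
  (forall k j, k \in DR :\: DQ -> j \in DR :\: DQ ->
     dotv (varpi k) (ealpha j) = (k == j)%:R).

Definition thetahat (n : nat) (DQ DR : {set 'I_n.-1})
    (varpi : 'I_n.-1 -> 'I_n -> R) (mu : 'I_n -> R[i]) : R[i] :=
  ((covol (DR :\: DQ) varpi)^-1)%:C * \prod_(k in DR :\: DQ) pairC mu (varpi k).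

(* rho_S^P: half the sum of the roots e_a - e_b (a<b) of T in N_S \cap M_P *)
Definition rhoSP (n : nat) (DS DP : {set 'I_n.-1}) (a : 'I_n) : R :=
  (\sum_(b : 'I_n | sameblk DP a b && ~~ sameblk DS a b)
      (if (a < b)%N then 1 else -1)) / 2.

Definition nuSP (n : nat) (DS DP : {set 'I_n.-1}) (r : nat -> nat) (a : 'I_n) : R :=
  - rhoSP DS DP a / (r a)%:R.

End Real.

Definition wact (T : Type) (n : nat) (w : 'S_n) (v : 'I_n -> T) : 'I_n -> T :=
  fun i => v (w^-1 i)%g.

(* The product thetahat_Q^R * theta_R is, up to nonzero covolumes (square roots of
   Gram determinants of families admitting a dual family), the product of the pairings
   <mu, v> where v runs over the coweights of Delta_Q^R and the coroots of R.  Each such v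
   has sum zero and its positive entries precede its negative ones, the cut lying at a
   simple root outside Delta_Q.  For mu = i (w x + w' x') + w nu + w' nu', the pairing
   <mu, v> can vanish for all x, x' in a_P^G only if v o w and v o w' have zero sum on
   every block of P.  In that case <w nu, v> = - sum_j rho(j) v(w j) / r_j < 0: w is
   increasing on the blocks of P, P_w separates the entries where v o w is positive from
   those where it is negative, and rho_{P_w}^P strictly decreases across such a
   separation.  So the real part of <mu, v> is negative, and finitely many affine
   functions, none identically zero, have a common non-zero point. *)

From HB Require Import structures.
From mathcomp Require Import all_boot all_order all_algebra all_fingroup.
From mathcomp Require Import reals complex.
From mathcomp Require Import zify ring.
Import Order.TTheory GRing.Theory Num.Theory.

Set Implicit Arguments. Unset Strict Implicit. Unset Printing Implicit Defensive.

Local Open Scope ring_scope.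

Section Blocks.
Variable n : nat.
Implicit Types D : {set 'I_n.-1}.

Lemma sameblkP D (i j : nat) :
  reflect (forall k : 'I_n.-1, (minn i j <= k < maxn i j)%N -> k \in D)
          (sameblk D i j).
Proof. by apply: (iffP forallP) => H k; apply/implyP; apply: H. Qed.

Lemma sameblk_refl D i : sameblk D i i.
Proof. by apply/sameblkP => k; rewrite minnn maxnn; lia. Qed.

Lemma sameblk_sym D i j : sameblk D i j = sameblk D j i.
Proof. by rewrite /sameblk minnC maxnC. Qed.

Lemma sameblk_trans D i j l : sameblk D i j -> sameblk D j l -> sameblk D i l.
Proof.
move=> /sameblkP Hij /sameblkP Hjl; apply/sameblkP => k hk.
have [hk'|hk'] := boolP (minn i j <= k < maxn i j)%N; first exact: Hij.
by apply: Hjl; move: hk hk'; lia.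
Qed.

Lemma sameblk_mid D (i j l : nat) : sameblk D i j -> (i <= l <= j)%N -> sameblk D i l.
Proof. by move=> /sameblkP H hl; apply/sameblkP => k hk; apply: H; lia. Qed.

Lemma sameblk_midr D (i j l : nat) : sameblk D i j -> (i <= l <= j)%N -> sameblk D l j.
Proof. by move=> /sameblkP H hl; apply/sameblkP => k hk; apply: H; lia. Qed.

Lemma sameblk_cut D (k : 'I_n.-1) (i j : nat) :
  k \notin D -> (i <= k < j)%N -> ~~ sameblk D i j.
Proof. by move=> kD hk; apply: contra kD => /sameblkP; apply; lia. Qed.

Lemma sameblk_succ D (k : 'I_n.-1) : sameblk D k k.+1 = (k \in D).
Proof.
apply/sameblkP/idP => [|kD l hl]; first by apply; lia.
by have -> : l = k by apply: val_inj => /=; lia.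
Qed.

Lemma sameblk0 (i j : 'I_n) : sameblk (set0 : {set 'I_n.-1}) i j = (i == j).
Proof.
apply/idP/eqP => [|->]; last exact: sameblk_refl.
apply: contraTeq; rewrite -val_eqE /= => hij; apply/negP => /sameblkP ij0.
have hm : (minn i j < n.-1)%N by move: hij (ltn_ord i) (ltn_ord j); lia.
suff : Ordinal hm \in (set0 : {set 'I_n.-1}) by rewrite inE.
by apply: ij0 => /=; lia.
Qed.

End Blocks.

Section Matrices.
Variable n : nat.
Implicit Types (D : {set 'I_n.-1}) (g : 'M[rat]_n) (a b i j : 'I_n).

Lemma invmx_wmat (w : 'S_n) : invmx (wmat w) = wmat w^-1.
Proof.
have wwV : wmat w *m wmat w^-1 = 1%:M.
  apply/matrixP => i j; rewrite !mxE (bigD1 (w^-1 j)%g) //= big1 ?addr0.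
    by rewrite !mxE permKV eqxx mulr1.
  by move=> l hl; rewrite !mxE (negbTE hl) mulr0.
have [wU _] := mulmx1_unit wwV.
by rewrite -[invmx _]mulmx1 -wwV mulmxA mulVmx // mul1mx.
Qed.

Lemma wconjE (w : 'S_n) g i j : wconj w g i j = g (w^-1 i)%g (w^-1 j)%g.
Proof.
rewrite /wconj invmx_wmat !mxE (bigD1 (w^-1 j)%g) //= big1 ?addr0.
  rewrite !mxE eqxx mulr1 (bigD1 (w^-1 i)%g) //= big1 ?addr0.
    by rewrite !mxE permKV eqxx mul1r.
  move=> l hl; rewrite !mxE; case: eqP => [il|]; last by rewrite mul0r.
  by rewrite il permK eqxx in hl.
by move=> l hl; rewrite !mxE (negbTE hl) mulr0.
Qed.

Lemma inPar_entry0 D g (i j : 'I_n) :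
  inPar D g -> (j < i)%N -> ~~ sameblk D i j -> g i j = 0.
Proof.
by case/andP=> _ /forallP/(_ i)/forallP/(_ j)/implyP H ji ij; apply/eqP/H; rewrite ji.
Qed.

Lemma mulmx_Levi_unip_block D (m u : 'M[rat]_n) (i j : 'I_n) :
  inLevi D m -> inUnip D u -> sameblk D i j -> (m *m u) i j = m i j.
Proof.
case/andP=> _ /forallP Hm /forallP Hu hij; rewrite !mxE (bigD1 j) //= big1 ?addr0.
  by move/forallP: (Hu j) => /(_ j); rewrite sameblk_refl eqxx => /eqP ->; rewrite mulr1.
move=> l hl; have [il|il] := boolP (sameblk D i l).
  have lj : sameblk D l j by apply: sameblk_trans hij; rewrite sameblk_sym.
  by move/forallP: (Hu l) => /(_ j); rewrite lj (negbTE hl) => /eqP ->; rewrite mulr0.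
by move/forallP: (Hm i) => /(_ l) /implyP /(_ il) /eqP ->; rewrite mul0r.
Qed.

Definition transvection (a b : 'I_n) : 'M[rat]_n := 1%:M + delta_mx a b.

Lemma transvectionE a b i j :
  transvection a b i j = (i == j)%:R + ((i == a) && (j == b))%:R.
Proof. by rewrite !mxE. Qed.

Lemma transvection_unit a b : a != b -> transvection a b \in unitmx.
Proof.
move=> ab; have inv : transvection a b *m (1%:M - delta_mx a b) = 1%:M.
  rewrite mulmxDl mulmxBr mulmxBr !mul1mx !mulmx1 mul_delta_mx_0 1?eq_sym //.
  by rewrite subr0 subrK.
by case: (mulmx1_unit inv).
Qed.

Lemma transvection_off0 a b (i j : 'I_n) :
  i != j -> ~~ ((i == a) && (j == b)) -> transvection a b i j = 0.
Proof. by rewrite transvectionE => /negbTE -> /negbTE ->; rewrite addr0. Qed.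

Lemma transvection_inPar D a b :
  a != b -> ((b < a)%N ==> sameblk D a b) -> inPar D (transvection a b).
Proof.
move=> ab hab; rewrite /inPar transvection_unit //=.
apply/forallP => i; apply/forallP => j; apply/implyP => /andP[ji nij].
rewrite transvection_off0 //; first by apply: contraTneq ji => ->; rewrite ltnn.
apply: contra nij => /andP[/eqP ia /eqP jb]; rewrite ia jb in ji *; exact: (implyP hab).
Qed.

Lemma transvection_inLevi D a b :
  a != b -> sameblk D a b -> inLevi D (transvection a b).
Proof.
move=> ab hab; rewrite /inLevi transvection_unit //=.
apply/forallP => i; apply/forallP => j; apply/implyP => nij.
rewrite transvection_off0 //; first by apply: contraNneq nij => ->; rewrite sameblk_refl.
by apply: contra nij => /andP[/eqP-> /eqP->].
Qed.

Lemma transvection_ab a b : a != b -> transvection a b a b = 1.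
Proof. by move=> ab; rewrite transvectionE (negbTE ab) !eqxx add0r. Qed.

Lemma QWP_increasing DQ DP (w : 'S_n) (j k : 'I_n) :
  in_QWP DQ DP w -> sameblk DP j k -> (j < k)%N -> (w j < w k)%N.
Proof.
move=> [Hw _] hjk jk; have nejk : j != k by rewrite neq_ltn jk.
have g_in : inLevi DP (transvection j k) && inB (transvection j k).
  by rewrite transvection_inLevi //= /inB transvection_inPar // ltnNge ltnW.
rewrite ltnNge leq_eqVlt negb_or; apply/andP; split.
  by apply: contra nejk => /eqP/val_inj/perm_inj ->.
apply/negP => kj; move: g_in; rewrite -Hw => /andP[_ /inPar_entry0 /(_ kj)].
rewrite sameblk0 wconjE !permK transvection_ab //.
by move/(_ (contra_neq (@perm_inj _ w _ _) nejk))/eqP; rewrite oner_eq0.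
Qed.

Lemma Pw_separates DQ DP DS (w : 'S_n)
    (HS : forall g, inPar DS g <-> inPw DQ DP w g) (j k : 'I_n) :
  sameblk DP j k -> (w j < w k)%N -> ~~ sameblk DQ (w j) (w k) -> ~~ sameblk DS j k.
Proof.
move=> hjk wjk nQ; apply/negP => hS.
have nekj : k != j by apply: contraTneq wjk => ->; rewrite ltnn.
have g_in : inPar DS (transvection k j) by rewrite transvection_inPar // sameblk_sym hS implybT.
have [m [u [mL mQ uU g_eq]]] := (HS _).1 g_in.
have mkj : m k j = 1.
  rewrite -(mulmx_Levi_unip_block mL uU); last by rewrite sameblk_sym.
  by rewrite -g_eq transvection_ab.
move: (inPar_entry0 mQ wjk); rewrite sameblk_sym nQ wconjE !permK mkj.
by move/(_ isT)/eqP; rewrite oner_eq0.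
Qed.

End Matrices.

Section Sums.
Variable R : realFieldType.

Lemma ltr_sum_at (I : finType) (P : pred I) (F G : I -> R) (i0 : I) :
  P i0 -> F i0 < G i0 -> (forall i, P i -> F i <= G i) ->
  \sum_(i | P i) F i < \sum_(i | P i) G i.
Proof.
move=> Pi0 FG0 FG; rewrite (bigD1 i0) // [X in _ < X](bigD1 i0) //=.
by apply: ltr_leD FG0 _; apply: ler_sum => i /andP[/FG].
Qed.

Lemma sumr_gt0_at (I : finType) (P : pred I) (F : I -> R) (i0 : I) :
  P i0 -> 0 < F i0 -> (forall i, P i -> 0 <= F i) -> 0 < \sum_(i | P i) F i.
Proof.
by move=> Pi0 F0 Fge0; have := ltr_sum_at (F := fun=> 0) Pi0 F0 Fge0; rewrite big1_eq.
Qed.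

Lemma exists_neg_of_sum0 (I : finType) (P : pred I) (u : I -> R) (i0 : I) :
  \sum_(i | P i) u i = 0 -> P i0 -> u i0 != 0 -> exists2 k, P k & u k < 0.
Proof.
move=> u0 Pi0 ui0; have [k /andP[Pk uk]|no_neg] := pickP (fun k => P k && (u k < 0)).
  by exists k.
have uge0 i : P i -> 0 <= u i by move=> Pi; move: (no_neg i); rewrite Pi leNgt /= => ->.
by move: ui0; rewrite (psumr_eq0P uge0 u0) ?eqxx.
Qed.

Lemma sum_separated_gt0 (I : finType) (P : pred I) (rho u : I -> R) (i0 : I) :
  \sum_(i | P i) u i = 0 ->
  (forall j k, P j -> P k -> 0 < u j -> u k < 0 -> rho k < rho j) ->
  P i0 -> u i0 != 0 -> 0 < \sum_(i | P i) rho i * u i.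
Proof.
move=> u0 sep Pi0 ui0; have [k0 Pk0 uk0] := exists_neg_of_sum0 u0 Pi0 ui0.
have [j0 Pj0 uj0] : exists2 j, P j & 0 < u j.
  have := @exists_neg_of_sum0 _ P (fun i => - u i) i0.
  rewrite sumrN u0 oppr0 oppr_eq0 => /(_ erefl Pi0 ui0) [j Pj].
  by rewrite oppr_lt0; exists j.
case: (@arg_maxP _ _ _ k0 (fun k => P k && (u k < 0)) rho) => [|c /andP[Pc uc] cmax].
  by rewrite Pk0.
(* shifting rho by the threshold rho c makes every term nonnegative, as u sums to 0 *)
have -> : \sum_(i | P i) rho i * u i = \sum_(i | P i) (rho i - rho c) * u i.
  by under [RHS]eq_bigr do rewrite mulrBl; rewrite sumrB -mulr_sumr u0 mulr0 subr0.
apply: (sumr_gt0_at Pj0); first by rewrite mulr_gt0 // subr_gt0 (sep _ _ Pj0 Pc).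
move=> i Pi; case: (ltrgtP (u i) 0) => [ui|ui|->]; last by rewrite mulr0.
  by rewrite nmulr_lge0 // subr_le0; apply: cmax; rewrite Pi ui.
by rewrite mulr_ge0 ?ltW // subr_gt0 (sep _ _ Pi Pc).
Qed.

End Sums.

Section CommonNonZero.
Variable R : realFieldType.

Lemma exists_notin (s : seq R) : exists t, t \notin s.
Proof.
pose M := 1 + \sum_(x <- s) `|x|; exists M; apply/negP => Ms.
have : `|M| <= \sum_(x <- s) `|x| by rewrite (big_rem _ Ms) /= lerDl sumr_ge0.
by rewrite leNgt (lt_le_trans _ (ler_norm M)) // ltr_pwDl.
Qed.

Variables (T : Type) (S : T -> Prop) (comb : T -> R -> T -> T).
Hypothesis S_comb : forall x y t, S x -> S y -> S (comb x t y).

Lemma exists_common_nonzero (I : eqType) (L : I -> T -> R) (s : seq I) (x0 : T) :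
    S x0 -> (forall k x y t, L k (comb x t y) = L k x + t * L k y) ->
    (forall k, k \in s -> exists2 y, S y & L k y != 0) ->
  exists2 x, S x & forall k, k \in s -> L k x != 0.
Proof.
move=> Sx0 L_affine; elim: s => [|k s IH] wit; first by exists x0.
have [x Sx Lx] := IH (fun j js => wit j (mem_behead (s := k :: s) js)).
have [y Sy Lky] := wit k (mem_head k s).
(* move from x along y, avoiding the finitely many values of t where some L j vanishes *)
have [t t_good] := exists_notin [seq - L j x / L j y | j <- k :: s].
exists (comb x t y) => [|j js]; first exact: S_comb.
rewrite L_affine; apply: contra t_good => /eqP Lt0; apply/mapP; exists j => //.
have Ljy : L j y != 0.
  move: js; rewrite inE => /predU1P[->//|js]; apply: contraNneq (Lx j js) => Ly0.
  by rewrite -Lt0 Ly0 mulr0 addr0.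
by apply: (mulIf Ljy); rewrite divfK //; apply/eqP; rewrite -subr_eq0 opprK addrC Lt0.
Qed.

End CommonNonZero.

Section BlockAverages.
Variables (R : realType) (n : nat).
Implicit Types (D : {set 'I_n.-1}) (i j : 'I_n).

Lemma blocksize_gt0 D i : (0 < blocksize D i)%N.
Proof. by apply/card_gt0P; exists i; rewrite inE sameblk_refl. Qed.

Lemma sum_block_avg D (F : 'I_n -> R) :
  \sum_i F i = \sum_(i : 'I_n) (\sum_(j : 'I_n | sameblk D i j) F j) / (blocksize D i)%:R.
Proof.
under [RHS]eq_bigr do rewrite mulr_suml.
rewrite (exchange_big_dep xpredT) //; apply: eq_bigr => j _.
symmetry; transitivity (\sum_(i in [set b : 'I_n | sameblk D j b]) F j / (blocksize D j)%:R).
  apply: eq_big => [i|i ij]; first by rewrite inE sameblk_sym.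
  congr (_ / _%:R); apply: eq_card => b; rewrite !inE.
  by apply/idP/idP; apply: sameblk_trans; rewrite // sameblk_sym.
rewrite sumr_const -/(blocksize D j) -[LHS]mulr_natr mulfVK // pnatr_eq0 -lt0n.
exact: blocksize_gt0.
Qed.

Lemma dot_projA D (v h : 'I_n -> R) : in_a D h -> dotv (projA D v) h = dotv v h.
Proof.
move=> hD; rewrite /dotv [RHS](sum_block_avg D); apply: eq_bigr => i _.
rewrite /projA mulrAC mulr_suml; congr (_ / _); apply: eq_bigr => j ij.
by rewrite (hD i j ij).
Qed.

Lemma sum_eq0_in_a0 D (v : 'I_n -> R) : in_a0 D v -> \sum_i v i = 0.
Proof. by move=> v0; rewrite (sum_block_avg D) big1 // => i _; rewrite v0 mul0r. Qed.

End BlockAverages.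

Section Rho.
Variables (R : realType) (n : nat).
Implicit Types (D DS DP : {set 'I_n.-1}).

Definition precedes D (a b : nat) : bool := (a < b)%N && ~~ sameblk D a b.

Lemma precedesWl D (j k b : nat) : (j <= k)%N -> precedes D k b -> precedes D j b.
Proof.
move=> jk /andP[kb nkb]; rewrite /precedes (leq_ltn_trans jk kb) /=.
by apply: contra nkb => jb; apply: sameblk_midr jb _; rewrite jk ltnW.
Qed.

Lemma precedesWr D (j k b : nat) : (j <= k)%N -> precedes D b j -> precedes D b k.
Proof.
move=> jk /andP[bj nbj]; rewrite /precedes (leq_trans bj jk) /=.
by apply: contra nbj => bk; apply: sameblk_mid bk _; rewrite ltnW.
Qed.

Lemma rhoSP_precedes DS DP (a : 'I_n) :
  rhoSP R DS DP a = (\sum_(b : 'I_n | sameblk DP a b)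
                      ((precedes DS a b)%:R - (precedes DS b a)%:R)) / 2.
Proof.
rewrite /rhoSP big_mkcond [X in _ = X / _]big_mkcond; congr (_ / 2).
apply: eq_bigr => b _; case: (sameblk DP a b) => //=.
rewrite /precedes [sameblk DS b a]sameblk_sym; case sab: (sameblk DS a b) => /=.
  by rewrite !andbF subrr.
by rewrite !andbT; case: ltngtP sab => [_ _|_ _|->]; rewrite ?sameblk_refl ?subr0 ?sub0r.
Qed.

Lemma rhoSP_lt DS DP (j k : 'I_n) :
  sameblk DP j k -> (j < k)%N -> ~~ sameblk DS j k -> rhoSP R DS DP k < rhoSP R DS DP j.
Proof.
move=> jkP jk jkS; rewrite !rhoSP_precedes ltr_pM2r ?invr_gt0 ?ltr0n //.
have le_nat (a b : bool) : (a -> b) -> a%:R <= b%:R :> R by case: a b => [] [] // /(_ isT).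
rewrite (eq_bigl (fun b : 'I_n => sameblk DP j b)); last first.
  by move=> b; apply/idP/idP; apply: sameblk_trans; rewrite // sameblk_sym.
apply: (ltr_sum_at (i0 := k)) => // [|b _].
  by rewrite /precedes ltnn jk jkS ltnNge ltnW //= !subr0 ltr01.
by apply: lerB; apply: le_nat; [apply: precedesWl | apply: precedesWr]; rewrite ltnW.
Qed.

End Rho.

Section NuSP.
Variables (R : realType) (n : nat).

Lemma pairing_nuSP_lt0 (DS DP : {set 'I_n.-1}) (r : nat -> nat)
    (Hr0 : forall a : 'I_n, (0 < r a)%N)
    (Hrc : forall a b : 'I_n, sameblk DP a b -> r a = r b) (u : 'I_n -> R)
    (u_blk0 : forall i : 'I_n, \sum_(j : 'I_n | sameblk DP i j) u j = 0)
    (u_sep : forall j k : 'I_n, sameblk DP j k -> 0 < u j -> u k < 0 ->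
       (j < k)%N && ~~ sameblk DS j k)
    (i0 : 'I_n) :
  u i0 != 0 -> \sum_j nuSP R DS DP r j * u j < 0.
Proof.
move=> ui0; pose blk (i : 'I_n) := \sum_(j : 'I_n | sameblk DP i j) rhoSP R DS DP j * u j.
have blk_gt0 (i j : 'I_n) : sameblk DP i j -> u j != 0 -> 0 < blk i.
  move=> ij uj; apply: (sum_separated_gt0 (u_blk0 i) _ ij uj) => a b ia ib ua ub.
  have ab : sameblk DP a b by apply: sameblk_trans ib; rewrite sameblk_sym.
  by case/andP: (u_sep a b ab ua ub); apply: rhoSP_lt.
have blk_ge0 (i : 'I_n) : 0 <= blk i.
  case: (pickP (fun j : 'I_n => sameblk DP i j && (u j != 0))) => [j /andP[ij uj]|u_blk].
    exact/ltW/(blk_gt0 i j).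
  by rewrite /blk big1 // => j ij; move: (u_blk j); rewrite ij => /negbFE/eqP ->; rewrite mulr0.
have -> : \sum_j nuSP R DS DP r j * u j
        = - \sum_i blk i / (r i)%:R / (blocksize DP i)%:R.
  rewrite (sum_block_avg DP) -sumrN; apply: eq_bigr => i _.
  rewrite -mulNr -mulNr /blk -sumrN; congr (_ * _); rewrite mulr_suml.
  apply: eq_bigr => j ij.
  by rewrite /nuSP (Hrc _ _ ij) mulrAC mulNr.
rewrite oppr_lt0 (sumr_gt0_at (i0 := i0)) // => [|i _].
  by rewrite !divr_gt0 ?ltr0n ?Hr0 ?blocksize_gt0 // (blk_gt0 i0 i0) ?sameblk_refl.
by rewrite !divr_ge0 ?ler0n.
Qed.

End NuSP.

Section PositiveDefinite.
Variables (R : realType) (m : nat).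

Definition posdef (M : 'M[R]_m) : Prop :=
  forall x : 'rV_m, x != 0 -> 0 < (x *m M *m x^T) 0 0.

Lemma posdef1 : posdef 1%:M.
Proof.
move=> x /eqP x0; rewrite mulmx1 mxE.
have [i xi] : exists i, x 0 i != 0.
  apply/existsP; apply: contra_notT x0 => /existsPn xi.
  by apply/rowP => i; rewrite mxE; apply/eqP/negPn.
apply: (sumr_gt0_at (i0 := i)) => // [|j _]; rewrite mxE.
  by rewrite lt_def mulf_neq0 //= -expr2 sqr_ge0.
by rewrite -expr2 sqr_ge0.
Qed.

Lemma posdef_det_neq0 (M : 'M[R]_m) : posdef M -> \det M != 0.
Proof.
by move=> Mpd; apply/negP => /det0P[x x0 xM]; move: (Mpd x x0); rewrite xM mul0mx mxE ltxx.
Qed.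

Lemma posdef_segment (M : 'M[R]_m) (t : R) :
  posdef M -> 0 <= t <= 1 -> posdef (t *: M + (1 - t) *: 1%:M).
Proof.
move=> Mpd /andP[t0 t1] x x0.
rewrite mulmxDr mulmxDl -!scalemxAr -!scalemxAl.
move: (Mpd x x0) (posdef1 x0).
move: (x *m M *m x^T) (x *m 1%:M *m x^T) => qM q1 qM_gt0 q1_gt0; rewrite !mxE.
have [->|tn0] := eqVneq t 0; first by rewrite mul0r add0r subr0 mul1r.
apply: ltr_wpDr; first by apply: mulr_ge0; [rewrite subr_ge0 | exact: ltW].
by apply: mulr_gt0; rewrite // lt_def tn0.
Qed.

Lemma posdef_det_gt0 (M : 'M[R]_m) : posdef M -> 0 < \det M.
Proof.
(* det (t M + (1 - t)) is a polynomial in t, equal to 1 at t = 0 and nonzero on [0, 1] *)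
move=> Mpd; rewrite ltNge; apply/negP => detM.
pose PM : 'M[{poly R}]_m := \matrix_(i, j) ('X * (M i j)%:P + (1 - 'X) * (i == j)%:R).
have PM_at t : (\det PM).[t] = \det (t *: M + (1 - t) *: 1%:M).
  rewrite -horner_evalE -det_map_mx; congr (\det _); apply/matrixP => i j.
  by rewrite !mxE /= horner_evalE !hornerE; case: eqP; rewrite !hornerE.
have [|t t01 root_t] := @poly_ivt _ (- \det PM) 0 1 ler01.
  rewrite !hornerN !PM_at scale0r add0r subr0 !scale1r det1 subrr scale0r addr0.
  by rewrite oppr_le0 ler01 oppr_ge0.
move: t01 => /(posdef_segment Mpd)/posdef_det_neq0.
by rewrite -PM_at -oppr_eq0 -hornerN (rootP root_t) eqxx.
Qed.

End PositiveDefinite.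

Section Gram.
Variables (R : realType) (n : nat).
Implicit Types (A : {set 'I_n.-1}) (f h : 'I_n.-1 -> 'I_n -> R).

Definition coordmx A f : 'M[R]_(#|A|, n) := \matrix_(i, l) f (enum_val i) l.

Lemma gram_coordmx A f : gram A f = coordmx A f *m (coordmx A f)^T.
Proof. by apply/matrixP => i j; rewrite !mxE; apply: eq_bigr => l _; rewrite !mxE. Qed.

Lemma coordmx_dual A f h :
    (forall k j, k \in A -> j \in A -> dotv (f k) (h j) = (k == j)%:R) ->
  coordmx A f *m (coordmx A h)^T = 1%:M.
Proof.
move=> dual; apply/matrixP => i j; rewrite !mxE.
rewrite -(inj_eq enum_val_inj) -dual ?enum_valP //.
by apply: eq_bigr => l _; rewrite !mxE.
Qed.

Lemma covol_neq0 A f h :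
    (forall k j, k \in A -> j \in A -> dotv (f k) (h j) = (k == j)%:R) ->
  covol A f != 0.
Proof.
move=> dual; rewrite /covol gt_eqF // sqrtr_gt0 posdef_det_gt0 // => x x0.
have xF0 : x *m coordmx A f != 0.
  by apply: contra x0 => /eqP xF; rewrite -[x]mulmx1 -(coordmx_dual dual) mulmxA xF mul0mx.
by rewrite gram_coordmx mulmxA -mulmxA -trmx_mul; have := posdef1 xF0; rewrite mulmx1.
Qed.

End Gram.

Section SimpleRoots.
Variables (R : realType) (n : nat).
Implicit Types (D DQ DR : {set 'I_n.-1}) (k l : 'I_n.-1) (u v : 'I_n -> R).

Definition root_lo k : 'I_n := widen_ord (leq_pred n) k.

Lemma root_hi_subproof k : (k.+1 < n)%N. Proof. by rewrite -ltn_predRL. Qed.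

Definition root_hi k : 'I_n := Ordinal (root_hi_subproof k).

Lemma sum_mul_delta u (a : 'I_n) : \sum_i u i * (i == a :> nat)%:R = u a.
Proof.
rewrite (bigD1 a) //= eqxx mulr1 big1 ?addr0 // => i.
by rewrite val_eqE => /negbTE ->; rewrite mulr0.
Qed.

Lemma dot_ealpha u k : dotv u (ealpha R k) = u (root_lo k) - u (root_hi k).
Proof.
rewrite /dotv /ealpha; under eq_bigr do rewrite mulrBr.
by rewrite sumrB (sum_mul_delta u (root_lo k)) (sum_mul_delta u (root_hi k)).
Qed.

Lemma dotvC u v : dotv u v = dotv v u.
Proof. by apply: eq_bigr => i _; rewrite mulrC. Qed.

Lemma sum_ealpha (P : pred 'I_n) k :
  \sum_(j | P j) ealpha R k j = (P (root_lo k))%:R - (P (root_hi k))%:R.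
Proof.
rewrite big_mkcond -(dot_ealpha (fun j => (P j)%:R)) dotvC.
by apply: eq_bigr => j _; case: (P j); rewrite ?mulr1 ?mulr0.
Qed.

Lemma telescope_delta (f : nat -> R) (k a b : nat) : (a <= b)%N ->
    (forall l : nat, (a <= l < b)%N -> f l - f l.+1 = (l == k)%:R) ->
  f a - f b = ((a <= k) && (k < b))%N%:R.
Proof.
elim: b => [|b IH] ab step.
  by move: ab; rewrite leqn0 => /eqP->; rewrite subrr ltn0 andbF.
case: (ltngtP a b.+1) ab => // [|-> _]; last first.
  by rewrite subrr (_ : (b < k < b.+1)%N = false) //; lia.
rewrite ltnS => ab _.
have IHb : f a - f b = ((a <= k) && (k < b))%N%:R.
  by apply: IH => // l /andP[al lb]; apply: step; rewrite al ltnW.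
have -> : f a - f b.+1 = (f a - f b) + (f b - f b.+1) by rewrite addrA subrK.
by rewrite step ?ab ?ltnSn // IHb -natrD; congr (_%:R); lia.
Qed.

Lemma block_telescope D v k :
    (forall l, l \in D -> v (root_lo l) - v (root_hi l) = (l == k)%:R) ->
  forall i j : 'I_n, (i <= j)%N -> sameblk D i j -> v i - v j = ((i <= k) && (k < j))%N%:R.
Proof.
move=> step i j ij /sameblkP ijD.
have := @telescope_delta (fun l : nat => v (insubd i l)) k i j ij; rewrite !valKd; apply.
move=> l /andP[il lj]; have ln : (l < n.-1)%N by rewrite ltn_predRL (leq_ltn_trans lj).
have -> : insubd i l = root_lo (Ordinal ln).
  by apply: val_inj; rewrite val_insubd (leq_trans ln (leq_pred n)).
have -> : insubd i l.+1 = root_hi (Ordinal ln).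
  by apply: val_inj; rewrite val_insubd -ltn_predRL ln.
by rewrite step // ijD //=; lia.
Qed.

(* the common shape of the coweights of Delta_Q^R and of the coroots of R *)
Definition cut_vector DQ v : Prop :=
  exists k, [/\ k \notin DQ, forall i : 'I_n, 0 < v i -> (i <= k)%N,
              forall i : 'I_n, v i < 0 -> (k < i)%N, \sum_i v i = 0 & exists i, v i != 0].

Lemma coroot_cut DQ DR k :
  DQ \subset DR -> k \notin DR -> cut_vector DQ (coroot R DR k).
Proof.
move=> QR kR; have kQ : k \notin DQ by apply: contra kR; apply: subsetP.
have corootE (i : 'I_n) : coroot R DR k i =
    ((sameblk DR i (root_lo k))%:R - (sameblk DR i (root_hi k))%:R) / (blocksize DR i)%:R.
  by rewrite /coroot /projA sum_ealpha.
have inv_ge0 (i : 'I_n) : 0 <= ((blocksize DR i)%:R)^-1 :> R by rewrite invr_ge0.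
exists k; split => // [i|i||].
- apply: contraTT; rewrite -ltnNge -leNgt corootE sameblk_sym => ki.
  by rewrite (negbTE (sameblk_cut kR _)) ?leqnn // sub0r mulNr oppr_le0 mulr_ge0.
- apply: contraTT; rewrite -leqNgt -leNgt corootE => ik.
  rewrite (negbTE (@sameblk_cut n DR k i (root_hi k) kR _)) ?ik ?ltnSn //.
  by rewrite subr0 mulr_ge0.
- have := @dot_projA R n DR (ealpha R k) (fun=> 1) (fun _ _ _ => erefl).
  by rewrite [dotv (ealpha R k) _]dotvC dot_ealpha subrr /dotv; under eq_bigr do rewrite mulr1.
- exists (root_lo k); rewrite corootE sameblk_refl sameblk_succ (negbTE kR) subr0 mul1r.
  by rewrite invr_eq0 pnatr_eq0 -lt0n blocksize_gt0.
Qed.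

Lemma varpi_cut DQ DR (varpi : 'I_n.-1 -> 'I_n -> R) k :
  is_coweight_basis DQ DR varpi -> k \in DR :\: DQ -> cut_vector DQ (varpi k).
Proof.
(* within a block of R, varpi k is constant except for a drop of 1 at k; as its block
   sums vanish, it is positive before k and negative after *)
case=> basis dual kRQ; have [vQ v0] := basis k kRQ.
move: kRQ; rewrite inE => /andP[kQ kR]; set v := varpi k in vQ v0 *.
have step l : l \in DR -> v (root_lo l) - v (root_hi l) = (l == k)%:R.
  move=> lR; have [lQ|lQ] := boolP (l \in DQ).
    rewrite (vQ (root_lo l) (root_hi l)) ?sameblk_succ // subrr.
    by case: eqP lQ kQ => // ->; move->.
  by rewrite -dot_ealpha dual 1?eq_sym // !inE ?lQ ?kQ ?kR.
have walk := block_telescope step.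
have v_mono (i j : 'I_n) : (i <= j)%N -> sameblk DR i j -> v j <= v i.
  by move=> ij bij; rewrite -subr_ge0 walk.
have v_flat (i j : 'I_n) : (i <= j)%N -> sameblk DR i j -> ~~ (i <= k < j)%N -> v i = v j.
  by move=> ij bij /negbTE nk; apply/subr0_eq; rewrite walk // nk.
have no_extremum (u : 'I_n -> R) (i : 'I_n) :
    in_a0 DR u -> 0 < u i -> (forall j : 'I_n, sameblk DR i j -> u i <= u j) -> False.
  move=> u0 ui uij; move/eqP: (u0 i); rewrite gt_eqF //.
  by apply: (sumr_gt0_at (sameblk_refl _ _) ui) => j /uij; apply: le_trans; apply: ltW.
exists k; split => // [i vi|i vi||].
- rewrite leqNgt; apply/negP => ki; apply: (no_extremum v i v0 vi) => j ij.
  have [ji|/ltnW ij'] := leqP j i; first by rewrite v_mono // sameblk_sym.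
  by rewrite (v_flat i j) // negb_and -ltnNge ki.
- rewrite ltnNge; apply/negP => ik.
  have nv0 : in_a0 DR (fun j => - v j) by move=> j; rewrite sumrN v0 oppr0.
  apply: (no_extremum _ i nv0); rewrite ?oppr_gt0 // => j ij; rewrite lerN2.
  have [ji|/ltnW ij'] := leqP j i; last exact: v_mono.
  by rewrite (v_flat j i) 1?sameblk_sym // negb_and -leqNgt ik orbT.
- exact: sum_eq0_in_a0 v0.
- have := step k kR; rewrite eqxx.
  case: (eqVneq (v (root_lo k)) 0) => [->|]; last by exists (root_lo k).
  rewrite sub0r => /eqP; rewrite eqr_oppLR => /eqP vhi.
  by exists (root_hi k); rewrite vhi oppr_eq0 oner_eq0.
Qed.

Definition fundamental_coweight (j : 'I_n.-1) : 'I_n -> R := fun i => (i <= j)%N%:R.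

Lemma coroot_fundamental_dual DR k j : k \notin DR -> j \notin DR ->
  dotv (coroot R DR k) (fundamental_coweight j) = (k == j)%:R.
Proof.
move=> kR jR.
have fund_aR : in_a DR (fundamental_coweight j).
  move=> a b; wlog ab : a b / (a <= b)%N.
    by move=> H; case: (leqP a b) => [/H//|/ltnW ba]; rewrite sameblk_sym => /(H _ _ ba) ->.
  move=> hab; rewrite /fundamental_coweight; have -> // : (a <= j)%N = (b <= j)%N.
  apply/idP/idP => [aj|]; last exact: leq_trans.
  by apply: contraTT hab; rewrite -ltnNge => jb; apply: sameblk_cut jR _; rewrite aj jb.
rewrite /coroot dot_projA // dotvC dot_ealpha /fundamental_coweight /= -val_eqE.
by case: ltngtP => kj; rewrite ?subrr ?subr0 //; lia.
Qed.

End SimpleRoots.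

Section Theta.
Variables (R : realType) (n : nat).
Local Open Scope complex_scope.
Implicit Types (DQ DR : {set 'I_n.-1}) (k : 'I_n.-1) (mu : 'I_n -> R[i]).

Lemma pairC_split (a b v : 'I_n -> R) :
  pairC (fun i => 'i * (a i)%:C + (b i)%:C) v
  = 'i * (\sum_i a i * v i)%:C + (\sum_i b i * v i)%:C.
Proof.
rewrite /pairC !rmorph_sum mulr_sumr -big_split; apply: eq_bigr => i _.
by rewrite !rmorphM mulrDl mulrA.
Qed.

Lemma complex_neq0 (a b : R) : (a != 0) || (b != 0) -> 'i * a%:C + b%:C != 0.
Proof.
by rewrite eq_complex /= !mul0r mulr0 mul1r subr0 add0r addr0 add0r negb_and orbC.
Qed.

(* the pairings of mu with theta_factor k are the linear factors of thetahat (for k in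
   DR :\: DQ) and of thetaR (for k outside DR) *)
Definition theta_index DQ DR k : bool := (k \in DR :\: DQ) || (k \notin DR).

Definition theta_factor DR (varpi : 'I_n.-1 -> 'I_n -> R) k : 'I_n -> R :=
  if k \in DR then varpi k else coroot R DR k.

Lemma theta_factor_cut DQ DR varpi k :
  DQ \subset DR -> is_coweight_basis DQ DR varpi -> theta_index DQ DR k ->
  cut_vector DQ (theta_factor DR varpi k).
Proof.
rewrite /theta_index /theta_factor => QR basis; case: ifP => kR.
  by rewrite orbF; apply: varpi_cut.
by move=> _; apply: coroot_cut; rewrite ?kR.
Qed.

Lemma thetahat_thetaR_neq0 DQ DR varpi mu : is_coweight_basis DQ DR varpi ->
    (forall k, theta_index DQ DR k -> pairC mu (theta_factor DR varpi k) != 0) ->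
  thetahat DQ DR varpi mu * thetaR DR mu != 0.
Proof.
move=> [_ dual] nz; rewrite !mulf_neq0 //.
- by rewrite fmorph_eq0 invr_eq0 (covol_neq0 dual).
- apply/prodf_neq0 => k kRQ; have := nz k; rewrite /theta_index /theta_factor kRQ.
  by move: kRQ; rewrite inE => /andP[_ ->]; apply.
- rewrite fmorph_eq0 invr_eq0 (@covol_neq0 _ _ _ _ (@fundamental_coweight R n)) //.
  by move=> k j; rewrite !inE; apply: coroot_fundamental_dual.
- apply/prodf_neq0 => k; rewrite inE => kR; have := nz k.
  by rewrite /theta_index /theta_factor kR (negbTE kR) orbT; apply.
Qed.

End Theta.

Section WeylPairing.
Variables (R : realType) (n : nat).
Implicit Types (DQ DP DS : {set 'I_n.-1}) (w : 'S_n) (u v y : 'I_n -> R).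

Lemma sum_wact w y v : \sum_i wact w y i * v i = \sum_j y j * v (w j).
Proof. by rewrite (reindex_inj (@perm_inj _ w)); apply: eq_bigr => j _; rewrite /wact permK. Qed.

Lemma in_aG_comb DP x y (t : R) :
  in_aG DP x -> in_aG DP y -> in_aG DP (fun i => x i + t * y i).
Proof.
move=> [xa x0] [ya y0]; split=> [i j ij|]; first by rewrite (xa i j ij) (ya i j ij).
by rewrite big_split /= -mulr_sumr x0 y0 mulr0 addr0.
Qed.

Lemma in_aG2_common_nonzero DP (I : eqType) (L : I -> ('I_n -> R) -> ('I_n -> R) -> R)
    (s : seq I) :
    (forall k x x' y y' t, L k (fun i => x i + t * y i) (fun i => x' i + t * y' i)
                           = L k x x' + t * L k y y') ->
    (forall k, k \in s -> exists y y', [/\ in_aG DP y, in_aG DP y' & L k y y' != 0]) ->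
  exists x x', [/\ in_aG DP x, in_aG DP x' & forall k, k \in s -> L k x x' != 0].
Proof.
move=> L_affine wit; pose S (p : ('I_n -> R) * ('I_n -> R)) := in_aG DP p.1 /\ in_aG DP p.2.
pose comb (p : ('I_n -> R) * ('I_n -> R)) t q :=
  (fun i => p.1 i + t * q.1 i, fun i => p.2 i + t * q.2 i).
have S_comb p q t : S p -> S q -> S (comb p t q).
  by move=> [? ?] [? ?]; split; apply: in_aG_comb.
have aG0 : @in_aG R n DP (fun=> 0) by split => //; rewrite big1.
have [|[x x'] [xP x'P] Lx] := @exists_common_nonzero R _ S comb S_comb _ (fun k p => L k p.1 p.2)
    s (fun=> 0, fun=> 0) (conj aG0 aG0) (fun k p q t => L_affine _ _ _ _ _ t).
  by move=> k /wit[y [y' [yP y'P Ly]]]; exists (y, y').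
by exists x, x'.
Qed.

Lemma in_aG_pairing_witness DP u (j0 : 'I_n) :
    \sum_i u i = 0 -> \sum_(j : 'I_n | sameblk DP j0 j) u j != 0 ->
  exists2 y, in_aG DP y & \sum_j y j * u j != 0.
Proof.
move=> u0 blk0; pose c : R := (blocksize DP j0)%:R / n%:R.
have n0 : n%:R != 0 :> R by rewrite pnatr_eq0 -lt0n (leq_ltn_trans _ (ltn_ord j0)).
exists (fun j => (sameblk DP j0 j)%:R - c); first split.
- move=> a b ab; have -> // : sameblk DP j0 a = sameblk DP j0 b.
  by apply/idP/idP => h; apply: sameblk_trans h _; rewrite // sameblk_sym.
- rewrite sumrB sumr_const card_ord -mulr_natr divfK //.
  apply/eqP; rewrite subr_eq0; apply/eqP.
  rewrite /blocksize -sum1_card natr_sum [RHS]big_mkcond; apply: eq_bigr => j _.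
  by rewrite inE; case: sameblk.
under eq_bigr do rewrite mulrBl.
rewrite sumrB -mulr_sumr u0 mulr0 subr0.
rewrite [X in X != 0](_ : _ = \sum_(j : 'I_n | sameblk DP j0 j) u j) //.
by rewrite [RHS]big_mkcond; apply: eq_bigr => j _; case: sameblk; rewrite ?mul1r ?mul0r.
Qed.

Section CutPairing.
Variables (DQ DP : {set 'I_n.-1}) (r : nat -> nat).
Hypotheses (Hr0 : forall a : 'I_n, (0 < r a)%N)
           (Hrc : forall a b : 'I_n, sameblk DP a b -> r a = r b).

Lemma pairing_wact_nuSP_lt0 DS w v :
    in_QWP DQ DP w -> (forall g : 'M[rat]_n, inPar DS g <-> inPw DQ DP w g) ->
    cut_vector DQ v -> (forall j0 : 'I_n, \sum_(j : 'I_n | sameblk DP j0 j) v (w j) = 0) ->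
  \sum_i wact w (nuSP R DS DP r) i * v i < 0.
Proof.
move=> Hw HS [c [cQ v_pos v_neg _ [i vi]]] blk0; rewrite sum_wact.
apply: (pairing_nuSP_lt0 Hr0 Hrc blk0 _ (i0 := (w^-1 i)%g)); last by rewrite permKV.
move=> j k jk vj vk; have wjk : (w j < w k)%N by apply: leq_ltn_trans (v_pos _ vj) (v_neg _ vk).
have -> : (j < k)%N.
  case: (ltngtP j k) => // [kj|/val_inj jk']; last by rewrite jk' ltnn in wjk.
  by have := QWP_increasing Hw (etrans (sameblk_sym _ _ _) jk) kj; rewrite ltnNge ltnW.
by rewrite (Pw_separates HS jk wjk) // (sameblk_cut cQ) // (v_pos _ vj) (v_neg _ vk).
Qed.

Lemma pairing_factor_nontrivial DS DS' w w' v :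
    in_QWP DQ DP w -> in_QWP DQ DP w' ->
    (forall g : 'M[rat]_n, inPar DS g <-> inPw DQ DP w g) ->
    (forall g : 'M[rat]_n, inPar DS' g <-> inPw DQ DP w' g) ->
    cut_vector DQ v ->
    \sum_i (wact w (nuSP R DS DP r) i + wact w' (nuSP R DS' DP r) i) * v i = 0 ->
  exists y y', [/\ in_aG DP y, in_aG DP y' &
    \sum_i (wact w y i + wact w' y' i) * v i != 0].
Proof.
move=> Hw Hw' HS HS' cut nu0.
have pairing (x x' : 'I_n -> R) : \sum_i (wact w x i + wact w' x' i) * v i
    = \sum_j x j * v (w j) + \sum_j x' j * v (w' j).
  by under eq_bigr do rewrite mulrDl; rewrite big_split !sum_wact.
have aG0 : @in_aG R n DP (fun=> 0) by split => //; rewrite big1.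
have sum_vw (w1 : 'S_n) : \sum_j v (w1 j) = 0.
  by case: cut => c [_ _ _ v0 _]; rewrite -[RHS]v0 [RHS](reindex_inj (@perm_inj _ w1)).
have [blk0|] := boolP [forall j0 : 'I_n, \sum_(j : 'I_n | sameblk DP j0 j) v (w j) == 0];
  last first.
  rewrite negb_forall => /existsP [j0 nz].
  have [y yP yv] := in_aG_pairing_witness (sum_vw w) nz; exists y, (fun=> 0); split => //.
  by rewrite pairing [X in _ + X]big1 ?addr0 // => j _; rewrite mul0r.
have [blk0'|] := boolP [forall j0 : 'I_n, \sum_(j : 'I_n | sameblk DP j0 j) v (w' j) == 0];
  last first.
  rewrite negb_forall => /existsP [j0 nz].
  have [y yP yv] := in_aG_pairing_witness (sum_vw w') nz; exists (fun=> 0), y; split => //.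
  by rewrite pairing [X in X + _]big1 ?add0r // => j _; rewrite mul0r.
have neg := ltrD (pairing_wact_nuSP_lt0 Hw HS cut (fun j0 => eqP (forallP blk0 j0)))
                 (pairing_wact_nuSP_lt0 Hw' HS' cut (fun j0 => eqP (forallP blk0' j0))).
by move: neg; rewrite !sum_wact -pairing nu0 addr0 ltxx.
Qed.

End CutPairing.

End WeylPairing.

Unset Implicit Arguments. Set Strict Implicit.

Local Open Scope complex_scope.

Theorem mainTheorem10 (R : realType) (n : nat)
  (DP : {set 'I_n.-1}) (r : nat -> nat)
  (Hr0 : forall a : 'I_n, (0 < r a)%N)
  (Hrc : forall a b : 'I_n, sameblk DP a b -> r a = r b)
  (Hrd : forall a : 'I_n, (r a %| blocksize DP a)%N)
  (DQ DR : {set 'I_n.-1}) (HQR : DQ \subset DR)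
  (w w' : 'S_n) (Hw : in_QWP DQ DP w) (Hw' : in_QWP DQ DP w')
  (Hpi : forall g : 'M[rat]_n, inPar (Dpi DP r) g -> inPw DQ DP w g /\ inPw DQ DP w' g)
  (DS DS' : {set 'I_n.-1})
  (HS : forall g : 'M[rat]_n, inPar DS g <-> inPw DQ DP w g)
  (HS' : forall g : 'M[rat]_n, inPar DS' g <-> inPw DQ DP w' g)
  (varpi : 'I_n.-1 -> 'I_n -> R) (Hvarpi : is_coweight_basis DQ DR varpi) :
  exists x x' : 'I_n -> R, [/\ in_aG DP x, in_aG DP x' &
    let mu : 'I_n -> R[i] := fun i =>
      'i * (wact w x i + wact w' x' i)%:C
      + (wact w (@nuSP R n DS DP r) i + wact w' (@nuSP R n DS' DP r) i)%:C in
    thetahat DQ DR varpi mu * thetaR DR mu != 0].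
Proof.
pose nu i := wact w (nuSP R DS DP r) i + wact w' (nuSP R DS' DP r) i.
pose fac := theta_factor DR varpi.
pose L k x x' := \sum_i (wact w x i + wact w' x' i) * fac k i.
pose s := [seq k <- enum 'I_n.-1 | theta_index DQ DR k && (\sum_i nu i * fac k i == 0)].
have L_affine k x x' y y' t : L k (fun i => x i + t * y i) (fun i => x' i + t * y' i)
                               = L k x x' + t * L k y y'.
  by rewrite /L mulr_sumr -big_split; apply: eq_bigr => i _; rewrite /wact /=; ring.
have wit k : k \in s -> exists y y', [/\ in_aG DP y, in_aG DP y' & L k y y' != 0].
  rewrite mem_filter => /andP[/andP[kI /eqP nu0] _].
  have := pairing_factor_nontrivial Hr0 Hrc Hw Hw' HS HS' (theta_factor_cut HQR Hvarpi kI).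
  by apply.
have [x [x' [xP x'P Lx]]] := in_aG2_common_nonzero L_affine wit.
exists x, x'; split => //; apply: thetahat_thetaR_neq0 Hvarpi _ => k kI.
rewrite pairC_split complex_neq0 //; apply/orP.
have [nu0|] := eqVneq (\sum_i nu i * fac k i) 0; [left; apply: Lx | by right].
by rewrite mem_filter kI nu0 eqxx mem_enum.
Qed.
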